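(* Let $G$ be a finite group. There exists a (non-unique) map of operads $\mathcal{SM}_{\varnothing}\to\varepsilon^*\mathscr{P}$, and any such map is a levelwise $(G\times\Sigma_\bullet)$-equivalence: for every $n$ and every subgroup $\Lambda\subseteq G\times\Sigma_n$, the induced functor on $\Lambda$-fixed subcategories is an equivalence of categories.
   Context: For a set $X$, $\widetilde X$ is the chaotic category on $X$ (exactly one morphism between any two objects), applied levelwise to operads. $\mathcal{SM}_\varnothing=\widetilde{\mathbb{F}(S)}$ where $\mathbb{F}$ is the free operad functor on symmetric sequences of $G$-sets and $S=(G\times\Sigma_0)/(G\times1)\sqcup(G\times\Sigma_2)/(G\times1)$ (this is the operad $\mathcal{SM}_{\mathbf{O}(\underline{\mathrm{triv}})}$ associated to the minimal indexing system, which has no nontrivial orbits). $\mathscr{P}=\widetilde{\Sigma_\bullet}$ is the nonequivariant permutativity (Barratt–Eccles) operad, the chaotification of the associative operad $\Sigma_\bullet$ with $\Sigma_n$ acting by left multiplication, and $\varepsilon^*\mathscr{P}$ is $\mathscr{P}$ with trivial $G$-action. *)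

From HB Require Import structures.
From mathcomp Require Import all_boot all_order all_fingroup.
From mathcomp Require Import gproduct.

Set Implicit Arguments.
Unset Strict Implicit.
Unset Printing Implicit Defensive.


Record category := Category {
  ob :> Type;
  hom : ob -> ob -> Type;
  idc : forall x, hom x x;
  compc : forall x y z, hom y z -> hom x y -> hom x z;
  compc_idl : forall x y (f : hom x y), compc (idc y) f = f;
  compc_idr : forall x y (f : hom x y), compc f (idc x) = f;
  compc_assoc : forall x y z w (f : hom z w) (g : hom y z) (h : hom x y),
      compc f (compc g h) = compc (compc f g) h }.
Arguments compc {c x y z}.
Arguments idc {c}.

Record functor (C D : category) := Functor {
  fobj :> C -> D;
  fmap : forall x y, hom x y -> hom (fobj x) (fobj y);
  fmap_id : forall x, fmap (idc x) = idc (fobj x);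
  fmap_comp : forall x y z (f : hom y z) (g : hom x y),
      fmap (compc f g) = compc (fmap f) (fmap g) }.
Arguments fmap {C D} _ {x y}.

Definition fid (C : category) : functor C C :=
  @Functor C C (fun x => x) (fun x y f => f) (fun x => erefl) (fun x y z f g => erefl).

Definition fcomp (C D E : category) (G : functor D E) (F : functor C D)
  : functor C E.
Proof.
refine (@Functor C E (fun x => G (F x)) (fun x y f => fmap G (fmap F f)) _ _).
- by move=> x; rewrite !fmap_id.
- by move=> x y z f g; rewrite !fmap_comp.
Defined.

Definition nat_iso (C D : category) (F G : functor C D) : Prop :=
  exists (eta : forall x, hom (F x) (G x)) (inv : forall x, hom (G x) (F x)),
    [/\ forall x, compc (inv x) (eta x) = idc (F x),
        forall x, compc (eta x) (inv x) = idc (G x) &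
        forall x y (f : hom x y), compc (fmap G f) (eta x) = compc (eta y) (fmap F f)].

Definition is_equivalence (C D : category) (F : functor C D) : Prop :=
  exists G : functor D C, nat_iso (fcomp G F) (fid C) /\ nat_iso (fcomp F G) (fid D).

Definition chaotic (X : Type) : category.
Proof.
refine (@Category X (fun _ _ => unit) (fun _ => tt) (fun _ _ _ _ _ => tt) _ _ _).
- by move=> x y [].
- by move=> x y [].
- by [].
Defined.

Definition chaotic_functor (X Y : Type) (f : X -> Y) : functor (chaotic X) (chaotic Y) :=
  @Functor (chaotic X) (chaotic Y) f (fun _ _ _ => tt) (fun _ => erefl) (fun _ _ _ _ _ => erefl).

(* Structure of a symmetric operad in G-sets: a right Sigma_n action, a
   G action, the unit, and the partial compositions x o_i y (plugging y
   into the input i of x). *)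
Record goperad (G : finGroupType) := GOperad {
  op : nat -> Type;
  sact : forall n, op n -> 'S_n -> op n;
  gact : forall n, G -> op n -> op n;
  ounit : op 1;
  ocomp : forall n m, op n -> 'I_n -> op m -> op (n.-1 + m) }.
Arguments sact {G} _ {n}.
Arguments gact {G} _ {n}.
Arguments ocomp {G} _ {n m}.

Definition gsact (G : finGroupType) (O : goperad G) n (l : G * 'S_n) (x : op O n) :=
  gact O l.1 (sact O x (l.2)^-1%g).

Arguments gsact {G} O {n} l x.

Definition is_fixed (G : finGroupType) (O : goperad G) n
    (L : {set G * 'S_n}) (x : op O n) : Prop :=
  forall l, l \in L -> gsact O l x = x.

Arguments is_fixed {G} O {n} L x.

Definition fixed_pts (G : finGroupType) (O : goperad G) n (L : {set G * 'S_n}) :=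
  {x : op O n | is_fixed O L x}.

(* The
   (G x Sigma_n)-action on morphisms and the composition on morphisms are
   forced (unique morphisms), so the Lambda-fixed subcategory of the
   chaotic category on O(n) is the chaotic category on the Lambda-fixed
   objects. *)
Definition fixed_subcat (G : finGroupType) (O : goperad G) n (L : {set G * 'S_n})
  : category := chaotic (fixed_pts O L).

(* Compatibility on
   morphisms is automatic in a chaotic target, so only the object-level
   conditions remain. *)
Record opmap (G : finGroupType) (O1 O2 : goperad G) := OpMap {
  opm : forall n, functor (chaotic (op O1 n)) (chaotic (op O2 n));
  opm_sact : forall n (x : op O1 n) s, opm n (sact O1 x s) = sact O2 (opm n x) s;
  opm_gact : forall n g (x : op O1 n), opm n (gact O1 g x) = gact O2 g (opm n x);
  opm_unit : opm 1 (ounit O1) = ounit O2;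
  opm_comp : forall n m (x : op O1 n) (i : 'I_n) (y : op O1 m),
      opm (n.-1 + m) (ocomp O1 x i y) = ocomp O2 (opm n x) i (opm m y) }.

Lemma opmap_fixed (G : finGroupType) (O1 O2 : goperad G) (F : opmap O1 O2) n
   (L : {set G * 'S_n}) (x : op O1 n) :
  is_fixed O1 L x -> is_fixed O2 L (opm F n x).
Proof.
move=> fx l /fx e; rewrite /gsact -opm_sact -opm_gact.
by rewrite /gsact in e; rewrite e.
Qed.

Definition fixed_functor (G : finGroupType) (O1 O2 : goperad G) (F : opmap O1 O2) n
   (L : {set G * 'S_n}) : functor (fixed_subcat O1 L) (fixed_subcat O2 L) :=
  chaotic_functor (X := fixed_pts O1 L) (Y := fixed_pts O2 L)
    (fun x => exist _ (opm F n (proj1_sig x)) (opmap_fixed F (proj2_sig x))).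

(* s in Sigma_n is read as the word s(0) s(1) ... s(n-1) (a linear order
   of the inputs).  Partial composition w o_i v substitutes the word v
   (shifted by i) for the letter i of w, shifting the letters > i of w by
   (m - 1).  Below, p is the position of the letter i in w. *)
Definition word_comp_fun n m (w : 'S_n) (i : 'I_n) (v : 'S_m) (q : nat) : nat :=
  let p := nat_of_ord ((w^-1)%g i) in
  let W := fun k : nat => if insub k is Some k' then nat_of_ord (w k') else 0 in
  let V := fun k : nat => if insub k is Some k' then nat_of_ord (v k') else 0 in
  let adj := fun a => if a < i then a else (a + m - 1)%N in
  if q < p then adj (W q)
  else if q < p + m then i + V (q - p)
  else adj (W (q + 1 - m)%N).

Definition word_comp n m (w : 'S_n) (i : 'I_n) (v : 'S_m) : 'S_(n.-1 + m) :=
  insubd (1%g : 'S_(n.-1 + m))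
    ([ffun q : 'I_(n.-1 + m) => insubd q (word_comp_fun w i v q)]
       : {ffun 'I_(n.-1 + m) -> 'I_(n.-1 + m)}).

(* Sigma_n acts on Sigma_n by (the paper's) left multiplication, i.e.
   relabelling of the letters; in MathComp's convention for products of
   permutations this is t |-> t * s. *)
Definition perm_sact n (t : 'S_n) (s : 'S_n) : 'S_n := (t * s)%g.

(* eps^* P : the associative operad Sigma_bullet with trivial G-action;
   its chaotification is the Barratt-Eccles operad. *)
Definition assoc_op (G : finGroupType) : goperad G :=
  @GOperad G (fun n => 'S_n) perm_sact (fun n _ x => x) 1%g (@word_comp).

(* S has one point in arity 0 (G x Sigma_0 / G x 1) and a free Sigma_2-
   orbit in arity 2 ((G x Sigma_2)/(G x 1) = Sigma_2), with trivial G-action.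
   Hence F(S)(n) = planar trees built from a nullary node (Stump) and a
   binary node, with n input leaves, together with a labelling of the leaves
   by a permutation in Sigma_n; G acts trivially. *)
Inductive tree := Leaf | Stump | Node of tree & tree.

Fixpoint leaves (t : tree) : nat :=
  match t with Leaf => 1 | Stump => 0 | Node l r => leaves l + leaves r end.

Fixpoint graft (t : tree) (p : nat) (u : tree) : tree :=
  match t with
  | Leaf => if p == 0 then u else Leaf
  | Stump => Stump
  | Node l r => if p < leaves l then Node (graft l p u) r
                else Node l (graft r (p - leaves l) u)
  end.

Fixpoint comb (k : nat) : tree :=
  match k with 0 => Stump | k'.+1 => Node Leaf (comb k') end.

Lemma leaves_comb k : leaves (comb k) = k.
Proof. by elim: k => //= k ->. Qed.

Definition ntree n := {t : tree | leaves t == n}.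

Definition comb_n n : ntree n := exist _ (comb n) (introT eqP (leaves_comb n)).

Definition free_el n := (ntree n * 'S_n)%type.

Definition free_sact n (x : free_el n) (s : 'S_n) : free_el n := (x.1, (x.2 * s)%g).

Definition free_unit : free_el 1 := (exist _ Leaf (eqxx 1%N), 1%g).

Definition free_comp n m (x : free_el n) (i : 'I_n) (y : free_el m) : free_el (n.-1 + m) :=
  let p := nat_of_ord ((x.2^-1)%g i) in
  let t := graft (proj1_sig x.1) p (proj1_sig y.1) in
  (match leaves t =P n.-1 + m with
   | ReflectT e => exist _ t (introT eqP e)
   | ReflectF _ => comb_n (n.-1 + m) end,
   word_comp x.2 i y.2).

Definition free_op (G : finGroupType) : goperad G :=
  @GOperad G free_el free_sact (fun n _ x => x) free_unit free_comp.

(* SM_empty = ~F(S),  eps^*P = ~Sigma_bullet (trivial G-action) *)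

(* Σ_n acts freely on itself, so a subgroup Λ of G × Σ_n has Λ-fixed points in
   Σ_•(n) only if its Σ_n-component is trivial; G acting trivially, every element
   of F(S)(n) is then Λ-fixed.  A functor between chaotic categories is an
   equivalence as soon as the source is inhabited whenever the target is.
   For non-uniqueness, the binary generator may go to the identity word or to
   the reversed word: reversal of words w ↦ w^op is an automorphism of the
   associative operad, so forgetting the tree and then reversing the word is a
   second operad map. *)
From mathcomp Require Import all_boot all_fingroup gproduct.
From mathcomp Require Import zify.

Set Implicit Arguments.
Unset Strict Implicit.
Unset Printing Implicit Defensive.

Lemma chaotic_functor_equivalence (X Y : Type) (F : functor (chaotic X) (chaotic Y)) :
  (Y -> X) -> is_equivalence F.
Proof.
move=> g; exists (chaotic_functor g).
by split; exists (fun _ => tt), (fun _ => tt); split.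
Qed.

Section FixedPoints.
Variables (G : finGroupType) (n : nat) (L : {set G * 'S_n}).

Lemma assoc_fixed_perm1 (w : 'S_n) l :
  is_fixed (assoc_op G) L w -> l \in L -> l.2 = 1%g.
Proof.
move=> fix_w /fix_w; rewrite /gsact /= /perm_sact => /(congr1 (fun u => w^-1 * u)%g).
by rewrite mulgA mulVg mul1g => /(congr1 (fun u => u^-1)%g); rewrite invgK invg1.
Qed.

Lemma free_fixed_perm1 (x : free_el n) :
  (forall l, l \in L -> l.2 = 1%g) -> is_fixed (free_op G) L x.
Proof.
by move=> L1 l /L1 l2; rewrite /gsact /= /free_sact l2 invg1 mulg1; case: x.
Qed.

Definition free_fixed_of_assoc_fixed (y : fixed_pts (assoc_op G) L) :
  fixed_pts (free_op G) L :=
  exist _ (comb_n n, 1%g)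
    (free_fixed_perm1 _ (fun l => assoc_fixed_perm1 (proj2_sig y))).

End FixedPoints.

Definition shift_above (m i a : nat) := if a < i then a else (a + m - 1)%N.

Definition splice (W V : nat -> nat) (m i p q : nat) : nat :=
  if q < p then shift_above m i (W q) else if q < p + m then i + V (q - p)
  else shift_above m i (W (q + 1 - m)%N).

Lemma shift_above_inj m i a b :
  a <> i -> b <> i -> shift_above m i a = shift_above m i b -> a = b.
Proof. by rewrite /shift_above; case: ifP; case: ifP; lia. Qed.

Lemma shift_above_out m i a v : a <> i -> v < m -> shift_above m i a <> i + v.
Proof. by rewrite /shift_above; case: ifP; lia. Qed.

Section Splice.
Variables (W V : nat -> nat) (n m i p : nat).
Hypotheses (lt_pn : p < n) (Wp : W p = i).
Hypotheses (W_lt : forall k, k < n -> W k < n) (V_lt : forall k, k < m -> V k < m).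
Hypotheses (W_inj : forall k1 k2, k1 < n -> k2 < n -> W k1 = W k2 -> k1 = k2).
Hypotheses (V_inj : forall k1 k2, k1 < m -> k2 < m -> V k1 = V k2 -> k1 = k2).

Let outer q := if q < p then q else (q + 1 - m)%N.

Lemma splice_in q : p <= q < p + m -> splice W V m i p q = i + V (q - p).
Proof. by case/andP=> le_pq lt_q; rewrite /splice ltnNge le_pq lt_q. Qed.

Lemma splice_out q : ~~ (p <= q < p + m) ->
  splice W V m i p q = shift_above m i (W (outer q)).
Proof. by rewrite /splice /outer; case: ltnP => // ?; case: ifP => //; lia. Qed.

Let outer_ne q : q < n.-1 + m -> ~~ (p <= q < p + m) -> outer q < n /\ outer q <> p.
Proof. by rewrite /outer; case: ifP; lia. Qed.

Let W_ne k : k < n -> k <> p -> W k <> i.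
Proof. by move=> lt_kn ne_kp /esym; rewrite -Wp => /W_inj; lia. Qed.

Lemma splice_lt q : q < n.-1 + m -> splice W V m i p q < n.-1 + m.
Proof.
have := W_lt lt_pn; rewrite Wp => lt_in lt_q.
have [q_in|q_out] := boolP (p <= q < p + m).
  have /V_lt : q - p < m by lia.
  by rewrite splice_in //; lia.
have [lt_o ne_o] := outer_ne lt_q q_out; have := W_ne lt_o ne_o.
by rewrite splice_out // /shift_above; have := W_lt lt_o; case: ifP; lia.
Qed.

Lemma splice_inj q1 q2 : q1 < n.-1 + m -> q2 < n.-1 + m ->
  splice W V m i p q1 = splice W V m i p q2 -> q1 = q2.
Proof.
move=> lt1 lt2.
have [in1|out1] := boolP (p <= q1 < p + m); have [in2|out2] := boolP (p <= q2 < p + m).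
- by rewrite !splice_in // => /addnI /V_inj; lia.
- have [lt_o ne_o] := outer_ne lt2 out2; have /V_lt lt_v : q1 - p < m by lia.
  by rewrite splice_in // splice_out // => /esym /(shift_above_out (W_ne lt_o ne_o)).
- have [lt_o ne_o] := outer_ne lt1 out1; have /V_lt lt_v : q2 - p < m by lia.
  by rewrite splice_out // splice_in // => /(shift_above_out (W_ne lt_o ne_o)).
- have [lt_o1 ne_o1] := outer_ne lt1 out1; have [lt_o2 ne_o2] := outer_ne lt2 out2.
  rewrite !splice_out // => /(shift_above_inj (W_ne lt_o1 ne_o1) (W_ne lt_o2 ne_o2)).
  by move/W_inj => /(_ lt_o1 lt_o2); rewrite /outer; case: ifP; case: ifP; lia.
Qed.

End Splice.

Lemma splice_rev (W V W' V' : nat -> nat) n m i p q : p < n ->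
  (forall k, k < n -> W' k = W (n - 1 - k)) ->
  (forall k, k < m -> V' k = V (m - 1 - k)) ->
  q < n.-1 + m ->
  splice W' V' m i (n - 1 - p) q = splice W V m i p (n.-1 + m - 1 - q).
Proof.
move=> lt_pn W'E V'E lt_q; rewrite /splice.
case: (ltnP q (n - 1 - p)) => [lt_q1|le_q1].
  rewrite W'E; last lia.
  rewrite ifF; last lia; rewrite ifF; last lia.
  by congr (shift_above _ _ (W _)); lia.
case: (ltnP q (n - 1 - p + m)) => [lt_q2|le_q2].
  rewrite V'E; last lia.
  rewrite ifF; last lia; rewrite ifT; last lia.
  by congr (_ + V _); lia.
rewrite W'E; last lia.
by rewrite ifT; [congr (shift_above _ _ (W _)) | ]; lia.
Qed.

Definition perm_nat n (w : 'S_n) (k : nat) : nat :=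
  if insub k is Some k' then nat_of_ord (w k') else 0.

Lemma perm_natE n (w : 'S_n) k (lt_kn : k < n) : perm_nat w k = w (Ordinal lt_kn).
Proof. by rewrite /perm_nat insubT. Qed.

Lemma perm_nat_ord n (w : 'S_n) (j : 'I_n) : perm_nat w j = w j.
Proof. by rewrite (perm_natE w (ltn_ord j)); congr (nat_of_ord (w _)); apply: ord_inj. Qed.

Lemma perm_nat_lt n (w : 'S_n) k : k < n -> perm_nat w k < n.
Proof. by move=> lt_kn; rewrite (perm_natE w lt_kn). Qed.

Lemma perm_nat_inj n (w : 'S_n) k1 k2 :
  k1 < n -> k2 < n -> perm_nat w k1 = perm_nat w k2 -> k1 = k2.
Proof.
move=> lt1 lt2; rewrite (perm_natE w lt1) (perm_natE w lt2).
by move/val_inj/perm_inj/(congr1 val).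
Qed.

Lemma word_comp_funE n m (w : 'S_n) (i : 'I_n) (v : 'S_m) :
  word_comp_fun w i v = splice (perm_nat w) (perm_nat v) m i ((w^-1)%g i).
Proof. by []. Qed.

Lemma word_compE n m (w : 'S_n) (i : 'I_n) (v : 'S_m) (q : 'I_(n.-1 + m)) :
  word_comp w i v q = word_comp_fun w i v q :> nat.
Proof.
have Wp : perm_nat w ((w^-1)%g i) = i by rewrite perm_nat_ord permKV.
have splice_lt_nm :=
  splice_lt (ltn_ord _) Wp (@perm_nat_lt _ w) (@perm_nat_lt _ v) (@perm_nat_inj _ w).
(* [word_comp] falls back to the identity unless this map is injective. *)
pose f := [ffun q : 'I_(n.-1 + m) => insubd q (word_comp_fun w i v q)].
have fE q' : f q' = word_comp_fun w i v q' :> nat.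
  by rewrite ffunE insubdK // word_comp_funE; apply: splice_lt_nm.
have inj_f : injectiveb f.
  apply/injectiveP => q1 q2 /(congr1 (@nat_of_ord _)); rewrite !fE !word_comp_funE.
  move/(splice_inj (ltn_ord _) Wp (@perm_nat_lt _ v)
          (@perm_nat_inj _ w) (@perm_nat_inj _ v)).
  by move=> /(_ (ltn_ord q1) (ltn_ord q2)) /ord_inj.
by rewrite /word_comp -/f -pvalE insubdK.
Qed.

Definition rev_word n : 'S_n := perm (@rev_ord_inj n).

Lemma rev_wordE n (k : 'I_n) : rev_word n k = rev_ord k.
Proof. by rewrite permE. Qed.

Lemma rev_wordV n : ((rev_word n)^-1 = rev_word n)%g.
Proof.
apply/eqP; rewrite eq_invg_mul; apply/eqP/permP => k.
by rewrite permM !rev_wordE rev_ordK perm1.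
Qed.

Lemma rev_word1 : rev_word 1 = 1%g.
Proof. by apply/permP => k; rewrite perm1 !ord1. Qed.

Lemma perm_nat_rev n (w : 'S_n) k :
  k < n -> perm_nat (rev_word n * w)%g k = perm_nat w (n - 1 - k).
Proof.
move=> lt_kn; have lt_rev : n - 1 - k < n by lia.
rewrite (perm_natE _ lt_kn) (perm_natE w lt_rev) permM rev_wordE.
by congr (nat_of_ord (w _)); apply: ord_inj => /=; lia.
Qed.

Lemma word_comp_rev n m (w : 'S_n) (i : 'I_n) (v : 'S_m) :
  word_comp (rev_word n * w)%g i (rev_word m * v)%g = (rev_word _ * word_comp w i v)%g.
Proof.
apply/permP => q; apply: ord_inj; rewrite permM !word_compE !word_comp_funE.
rewrite invMg permM rev_wordV rev_wordE /=.
have lt_p := ltn_ord ((w^-1)%g i); have lt_q := ltn_ord q.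
have -> : n - ((w^-1)%g i).+1 = n - 1 - (w^-1)%g i by lia.
rewrite (splice_rev _ lt_p (@perm_nat_rev n w) (@perm_nat_rev m v) lt_q).
by rewrite rev_wordE; congr splice; rewrite /=; lia.
Qed.

Definition forget_tree_opmap (G : finGroupType) : opmap (free_op G) (assoc_op G) :=
  @OpMap G (free_op G) (assoc_op G)
    (fun n => chaotic_functor (fun x : free_el n => x.2))
    (fun _ _ _ => erefl) (fun _ _ _ => erefl) erefl (fun _ _ _ _ _ => erefl).

Definition rev_word_opmap (G : finGroupType) : opmap (free_op G) (assoc_op G).
Proof.
refine (@OpMap G (free_op G) (assoc_op G)
  (fun n => chaotic_functor (fun x : free_el n => rev_word n * x.2)%g) _ _ _ _) => //.
- by move=> n x s; rewrite /= /perm_sact mulgA.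
- by rewrite /= rev_word1 mulg1.
- by move=> n m x i y; rewrite /= word_comp_rev.
Defined.

Theorem proposition4p15 (G : finGroupType) :
  (exists F1 F2 : opmap (free_op G) (assoc_op G),
      exists n (x : op (free_op G) n), opm F1 n x <> opm F2 n x)
  /\ (forall F : opmap (free_op G) (assoc_op G),
        forall n (L : {group (G * 'S_n)%type}),
          is_equivalence (fixed_functor F (L : {set G * 'S_n}))).
Proof.
split.
  exists (forget_tree_opmap G), (rev_word_opmap G), 2, (comb_n 2, 1%g) => /=.
  by move/(congr1 (fun s : 'S_2 => s ord0)); rewrite mulg1 rev_wordE perm1.
move=> F n L; apply: chaotic_functor_equivalence.
exact: free_fixed_of_assoc_fixed.
Qed.
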